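(* Let $\mathcal{V}$ be the set of positive integers $v$ such that $v \equiv 27 \pmod{30}$ and $\operatorname{ord}_p(-2) \equiv 0 \pmod 4$ for each prime divisor $p$ of $v-2$. Then $\mathcal{V}$ is infinite, and for each $v \in \mathcal{V}$ there exists a Steiner triple system of order $v$ having no parallel class.
   Context: A Steiner triple system of order $v$ is a pair $(V,\mathcal{B})$ where $V$ is a set of $v$ points and $\mathcal{B}$ is a collection of $3$-element subsets of $V$ (triples) such that each unordered pair of distinct points lies in exactly one triple of $\mathcal{B}$. A parallel class in a Steiner triple system $(V,\mathcal{B})$ is a subset of $\mathcal{B}$ that partitions $V$. For a prime $p$, $\operatorname{ord}_p(x)$ denotes the multiplicative order of $x$ in $\mathbb{Z}_p$. *)

From mathcomp Require Import all_boot all_order all_algebra.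
Set Implicit Arguments. Unset Strict Implicit. Unset Printing Implicit Defensive.
Import GRing.Theory Num.Theory.

Definition is_mult_order (p : nat) (x : int) (k : nat) : Prop :=
  [/\ 0 < k,
      (p%:Z %| (x ^+ k - 1)%R)%Z
    & forall j : nat, 0 < j < k -> ~~ (p%:Z %| (x ^+ j - 1)%R)%Z]%N.

Definition ord_divisible (p : nat) (x : int) (d : nat) : Prop :=
  exists k, is_mult_order p x k /\ (d %| k)%N.

Definition inV (v : nat) : Prop :=
  [/\ 0 < v, v = 27 %[mod 30]
    & forall p, prime p -> (p %| v - 2) -> ord_divisible p (-2)%R 4]%N.

Definition is_STS (T : finType) (B : {set {set T}}) : Prop :=
  (forall b, b \in B -> #|b| = 3) /\
  (forall x y : T, x != y -> exists! b, b \in B /\ x \in b /\ y \in b).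

Definition parallel_class (T : finType) (B P : {set {set T}}) : Prop :=
  P \subset B /\ partition P [set: T].

From mathcomp Require Import all_boot all_order all_algebra.
From mathcomp Require Import cyclic zify ring.
Set Implicit Arguments. Unset Strict Implicit. Unset Printing Implicit Defensive.
Import GRing.Theory Num.Theory.
Open Scope ring_scope.

(* Write v = n + 2 with n = 5m, let H = mZ_n (the subgroup of order 5) and a = -2.
   The points are Z_n and two points at infinity.  The blocks are the lines of a Fano
   plane on H and the two infinite points, the triples {x, y, -x-y} not inside H, and,
   for the pairs {x, ax} on which such a triple degenerates, {oo_b, x, ax} with b the
   parity of x.  Since 4 | ord_p(-2) for every prime p | m, a congruence
   x = +-a^i x (mod H) with x outside H forces i to be even; hence the parity of i in
   u = +-a^i w (mod H) is well defined on the classes of Z_n \ H, and a flips it.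

   In a parallel class the blocks partition Z_n, whose elements sum to 0 (n is odd).
   A block avoiding both infinite points sums into H, and to 0 if it misses m.  If the
   infinite points share their block {oo_true, oo_false, m}, the total is m <> 0.
   Otherwise the two blocks through them sum outside H: two Fano lines through the two
   infinite points always meet, a block {oo_b, x, ax} sums to -q with parity q = b, and
   parity is invariant under negation modulo H. *)

Lemma mult_order_dvd p (x : int) k j :
  is_mult_order p x k -> (p%:Z %| x ^+ j - 1)%Z -> (k %| j)%N.
Proof.
move=> [k_gt0 dvd_k min_k] dvd_j.
have dvd_mul q : (p%:Z %| x ^+ (q * k) - 1)%Z.
  elim: q => [|q IHq]; first by rewrite mul0n expr0 subrr dvdz0.
  have -> : x ^+ (q.+1 * k) - 1 = x ^+ k * (x ^+ (q * k) - 1) + (x ^+ k - 1).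
    by rewrite mulSn exprD; ring.
  by rewrite rpredD // dvdz_mull.
have dvd_mod : (p%:Z %| x ^+ (j %% k)%N - 1)%Z.
  have -> : x ^+ (j %% k)%N - 1
      = x ^+ j - 1 - x ^+ (j %% k)%N * (x ^+ (j %/ k * k)%N - 1).
    by rewrite {2}(divn_eq j k) exprD; ring.
  by rewrite rpredB // dvdz_mull.
have [mod0|mod_gt0] := posnP (j %% k)%N; first exact/eqP.
by have := min_k (j %% k)%N; rewrite mod_gt0 ltn_pmod // dvd_mod => /(_ isT).
Qed.

(* [ord_p(-2)] divides [2d] or [d], according to the sign. *)
Lemma ord4_signed_pow_even p (s : bool) d : ord_divisible p (-2) 4 ->
  (p%:Z %| (-2) ^+ d - (-1) ^+ s)%Z -> ~~ odd d.
Proof.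
move=> [k [ord_k dvd4k]] dvd_d.
case: s dvd_d => /= dvd_d.
  have : (p%:Z %| (-2 : int) ^+ (d * 2) - 1)%Z.
    have -> : (-2 : int) ^+ (d * 2) - 1 = ((-2) ^+ d - 1) * ((-2) ^+ d - (-1) ^+ 1).
      by rewrite exprM; ring.
    exact: dvdz_mull.
  move=> /(mult_order_dvd ord_k) /(dvdn_trans dvd4k).
  by rewrite (_ : 4 = 2 * 2)%N // dvdn_pmul2r // -dvdn2.
rewrite expr0 in dvd_d.
have dvd2k : (2 %| k)%N := dvdn_trans (isT : (2 %| 4)%N) dvd4k.
by rewrite -dvdn2 (dvdn_trans dvd2k (mult_order_dvd ord_k dvd_d)).
Qed.

Section SteinerOperation.
Variables (T : finType) (op : T -> T -> T).
Hypothesis opC : forall s t, s != t -> op s t = op t s.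
Hypothesis op_neql : forall s t, s != t -> op s t != s.
Hypothesis opK : forall s t, s != t -> op s (op s t) = t.

Definition steiner_block s t := [set s; t; op s t].
Definition steiner_blocks : {set {set T}} :=
  [set steiner_block p.1 p.2 | p : T * T & p.1 != p.2].

Lemma op_neqr s t : s != t -> op s t != t.
Proof. by move=> neq_st; rewrite opC // op_neql // eq_sym. Qed.

Lemma steiner_blockP b :
  reflect (exists s t, s != t /\ b = steiner_block s t) (b \in steiner_blocks).
Proof.
apply: (iffP imsetP) => [[[s t] /= neq_st ->]|[s [t [neq_st ->]]]].
  by exists s, t; rewrite inE in neq_st.
by exists (s, t); rewrite ?inE.
Qed.

Lemma steiner_block_eq s t x y : s != t -> x != y ->
  x \in steiner_block s t -> y \in steiner_block s t ->
  steiner_block s t = steiner_block x y.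
Proof.
move=> neq_st neq_xy.
have neq_us := op_neql neq_st; have neq_ut := op_neqr neq_st.
have op_ts : op t s = op s t by rewrite opC // eq_sym.
have op_su : op s (op s t) = t := opK neq_st.
have op_us : op (op s t) s = t by rewrite opC ?op_su.
have op_tu : op t (op s t) = s by rewrite -op_ts opK // eq_sym.
have op_ut : op (op s t) t = s by rewrite opC ?op_tu.
rewrite !inE => /orP[/orP[]|] /eqP xE /orP[/orP[]|] /eqP yE; subst x y;
  move: neq_xy; rewrite ?eqxx // => _;
  rewrite /steiner_block ?op_ts ?op_su ?op_us ?op_tu ?op_ut; apply/setP => w;
  by rewrite !inE; case: (w == s); case: (w == t); case: (w == op s t); rewrite ?orbT.
Qed.

Lemma card_steiner_block s t : s != t -> #|steiner_block s t| = 3%N.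
Proof.
move=> neq_st; rewrite /steiner_block -setUA cardsU1 cards2 !inE.
by rewrite (negbTE neq_st) eq_sym (negbTE (op_neql neq_st)) eq_sym op_neqr.
Qed.

Lemma steiner_blocks_STS : is_STS steiner_blocks.
Proof.
split=> [b /steiner_blockP[s [t [neq_st ->]]]|x y neq_xy].
  exact: card_steiner_block.
exists (steiner_block x y); split.
  by split; [apply/steiner_blockP; exists x, y | rewrite !inE !eqxx ?orbT].
move=> b [/steiner_blockP[s [t [neq_st ->]]] [xb yb]].
by rewrite (steiner_block_eq neq_st neq_xy xb yb).
Qed.

Lemma sum_steiner_block (V : nmodType) (F : T -> V) s t : s != t ->
  \sum_(z in steiner_block s t) F z = F s + F t + F (op s t).
Proof.
move=> neq_st; rewrite /steiner_block -setUA big_setU1 /=; last first.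
  by rewrite !inE negb_or neq_st eq_sym op_neql.
by rewrite big_setU1 ?big_set1 ?addrA //= inE eq_sym op_neqr.
Qed.

End SteinerOperation.

Definition STS_without_parallel_class (T : finType) :=
  exists B : {set {set T}}, is_STS B /\ ~ exists P, parallel_class B P.

Section Transport.
Variables (U V : finType) (f : U -> V) (g : V -> U).
Hypotheses (fK : cancel f g) (gK : cancel g f).

Let mem_imset_g (b : {set V}) x : (x \in g @: b) = (f x \in b).
Proof. by rewrite -{1}(fK x) (mem_imset _ _ (can_inj gK)). Qed.

Lemma is_STS_imset (B : {set {set V}}) : is_STS B -> is_STS [set g @: b | b : {set V} in B].
Proof.
move=> [card3 uniq_block]; split=> [_ /imsetP[b bB ->]|x y neq_xy].
  by rewrite card_imset ?card3 //; apply: can_inj gK.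
have [|b [[bB [xb yb]] b_uniq]] := uniq_block (f x) (f y).
  by apply: contra neq_xy => /eqP /(can_inj fK) ->.
exists (g @: b); split; first by rewrite imset_f // !mem_imset_g.
move=> _ [/imsetP[c cB ->]]; rewrite !mem_imset_g => -[xc yc].
by rewrite (b_uniq c).
Qed.

Lemma parallel_class_imset (B : {set {set V}}) (P : {set {set U}}) :
  parallel_class [set g @: b | b : {set V} in B] P ->
  parallel_class B [set f @: c | c : {set U} in P].
Proof.
have gfK (b : {set V}) : f @: (g @: b) = b.
  by rewrite -imset_comp (eq_imset _ gK) imset_id.
have fT : f @: [set: U] = [set: V].
  by apply/setP => t; rewrite inE -(gK t) imset_f.
move=> [/subsetP sPB partP]; split.
  by apply/subsetP => _ /imsetP[c /sPB /imsetP[b bB ->] ->]; rewrite gfK.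
by rewrite -fT imset_partition //; apply: can_inj fK.
Qed.

End Transport.

Lemma STS_without_parallel_class_card (U V : finType) : #|U| = #|V| ->
  STS_without_parallel_class V -> STS_without_parallel_class U.
Proof.
move=> cardUV [B [STS_B noPC]].
pose f (x : U) : V := enum_val (cast_ord cardUV (enum_rank x)).
pose g (t : V) : U := enum_val (cast_ord (esym cardUV) (enum_rank t)).
have fK : cancel f g by move=> x; rewrite /f /g enum_valK cast_ordK enum_rankK.
have gK : cancel g f by move=> t; rewrite /f /g enum_valK cast_ordKV enum_rankK.
exists [set g @: b | b : {set V} in B]; split; first exact: is_STS_imset.
move=> [P /(parallel_class_imset fK gK) PC]; apply: noPC.
by exists [set f @: c | c : {set U} in P].
Qed.

Definition fano_table : seq (seq nat) :=
  [:: [:: 0; 4; 6; 5; 1; 3; 2]; [:: 4; 1; 3; 2; 0; 6; 5]; [:: 6; 3; 2; 1; 5; 4; 0];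
      [:: 5; 2; 1; 3; 6; 0; 4]; [:: 1; 0; 5; 6; 4; 2; 3]; [:: 3; 6; 4; 0; 2; 5; 1];
      [:: 2; 5; 0; 4; 3; 1; 6]].

Definition fano_third (i j : nat) : nat := nth 0 (nth [::] fano_table i) j.

Section FanoTable.
Local Open Scope nat_scope.

Lemma fano_third_lt7 i j : i < 7 -> j < 7 -> fano_third i j < 7.
Proof. by case: i => [|[|[|[|[|[|[|i]]]]]]]; case: j => [|[|[|[|[|[|[|j]]]]]]]. Qed.

Lemma fano_thirdC i j : i < 7 -> j < 7 -> fano_third i j = fano_third j i.
Proof. by case: i => [|[|[|[|[|[|[|i]]]]]]]; case: j => [|[|[|[|[|[|[|j]]]]]]]. Qed.

Lemma fano_third_neq i j : i < 7 -> j < 7 -> i != j -> fano_third i j != i.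
Proof. by case: i => [|[|[|[|[|[|[|i]]]]]]]; case: j => [|[|[|[|[|[|[|j]]]]]]]. Qed.

Lemma fano_thirdK i j : i < 7 -> j < 7 -> i != j -> fano_third i (fano_third i j) = j.
Proof. by case: i => [|[|[|[|[|[|[|i]]]]]]]; case: j => [|[|[|[|[|[|[|j]]]]]]]. Qed.

Lemma fano_line_below5 i j : i < 5 -> j < 5 -> i != j -> fano_third i j < 5 ->
  1 \in [:: i; j; fano_third i j].
Proof. by case: i => [|[|[|[|[|i]]]]]; case: j => [|[|[|[|[|j]]]]]. Qed.

Lemma fano_lines_5_6_meet i j : i < 5 -> j < 5 ->
  fano_third 5 i < 5 -> fano_third 6 j < 5 ->
  has (mem [:: j; fano_third 6 j]) [:: i; fano_third 5 i].
Proof. by case: i => [|[|[|[|[|i]]]]]; case: j => [|[|[|[|[|j]]]]]. Qed.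

Lemma fano_third56 : fano_third 5 6 = 1. Proof. by []. Qed.

End FanoTable.

Section Construction.
Variables (n' m : nat).
Local Notation n := n'.+2.
Hypothesis n_eq : n = (5 * m)%N.
Hypothesis m_odd : odd m.
Hypothesis m_gt1 : (1 < m)%N.
Hypothesis n_coprime3 : coprime n 3.
Hypothesis ord_m : forall p, prime p -> (p %| m)%N -> ord_divisible p (-2) 4.
Local Notation Z := 'Z_n.

Let m_dvd_n : (m %| n)%N. Proof. by rewrite n_eq dvdn_mull. Qed.
Let n_odd : odd n. Proof. by rewrite n_eq oddM m_odd. Qed.

Definition inH (x : Z) := (m %| x)%N.

Lemma inH_nat k : inH k%:R = (m %| k)%N.
Proof. by rewrite /inH val_Zp_nat // /dvdn (modn_dvdm _ m_dvd_n). Qed.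

Lemma inH0 : inH 0. Proof. exact: dvdn0. Qed.

Lemma inHD x y : inH x -> inH y -> inH (x + y).
Proof. by move=> Hx Hy; rewrite -(natr_Zp x) -(natr_Zp y) -natrD inH_nat dvdn_add. Qed.

Lemma inHMl x y : inH x -> inH (y * x).
Proof. by move=> Hx; rewrite -(natr_Zp x) -(natr_Zp y) -natrM inH_nat dvdn_mull. Qed.

Lemma inHN x : inH x -> inH (- x).
Proof. by rewrite -mulN1r; apply: inHMl. Qed.

Lemma inHB x y : inH x -> inH y -> inH (x - y).
Proof. by move=> Hx Hy; rewrite inHD ?inHN. Qed.

Lemma inHNE x : inH (- x) = inH x.
Proof. by apply/idP/idP => /inHN; rewrite ?opprK. Qed.

Lemma inH_unitM u x : u \is a GRing.unit -> inH (u * x) = inH x.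
Proof. by move=> u_unit; apply/idP/idP => [/(inHMl u^-1)|/inHMl//]; rewrite mulKr. Qed.

Lemma inH_int (z : int) : inH z%:~R = (m%:Z %| z)%Z.
Proof.
case: z => k; first exact: inH_nat.
by rewrite NegzE mulrNz inHNE rpredN; apply: inH_nat.
Qed.

Local Notation a := (-2 : Z).

Lemma a_unit : a \is a GRing.unit.
Proof. by rewrite unitrN unitZpE // coprimen2 n_odd. Qed.

Lemma signed_pow_inH_even d (s : bool) y :
  ~~ inH y -> inH ((a ^+ d - (-1) ^+ s) * y) -> ~~ odd d.
Proof.
move=> yH; pose c : int := (-2) ^+ d - (-1) ^+ s.
have -> : (a ^+ d - (-1) ^+ s) * y = (c * (val y)%:Z)%:~R.
  by rewrite rmorphM rmorphB !rmorphXn rmorphN rmorphN1 -{1}(natr_Zp y).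
rewrite inH_int => m_dvd.
have [cop|ncop] := boolP (coprimez m c).
  by case/negP: yH; move: m_dvd; rewrite Gauss_dvdzr.
have g_gt1 : (1 < gcdn m `|c|)%N.
  have : (0 < gcdn m `|c|)%N by rewrite gcdn_gt0; apply/orP; left; lia.
  by move: ncop; rewrite coprimezE /coprime /=; lia.
have p_prime := pdiv_prime g_gt1.
have p_dvd_m : (pdiv (gcdn m `|c|) %| m)%N := dvdn_trans (pdiv_dvd _) (dvdn_gcdl _ _).
apply: (ord4_signed_pow_even (s := s) (ord_m p_prime p_dvd_m)).
by rewrite dvdzE /=; apply: dvdn_trans (pdiv_dvd _) (dvdn_gcdr _ _).
Qed.

Definition spow (s : bool) (i : nat) : Z := (-1) ^+ s * a ^+ i.

Local Notation N := (totient n).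

Let N_gt0 : (0 < N)%N. Proof. by rewrite totient_gt0. Qed.

Lemma a_totient : a ^+ N = 1.
Proof.
have a_nat : a = n'%:R.
  apply/eqP; rewrite eq_sym -subr_eq0 opprK -natrD addn2.
  by rewrite -[n'.+2]/n (pchar_Zp (isT : (1 < n)%N)).
have cop : coprime n' n.
  rewrite -addn2 /coprime gcdnDl -/(coprime n' 2) coprimen2.
  by move: n_odd => /=; rewrite negbK.
by rewrite a_nat -natrX -Zp_nat_mod // (Euler_exp_totient cop) modn_small.
Qed.

Lemma spow_unit s i : spow s i \is a GRing.unit.
Proof. by rewrite unitrM !unitrX ?unitrN1 ?a_unit. Qed.

Lemma inH_spowM s i x : inH (spow s i * x) = inH x.
Proof. exact/inH_unitM/spow_unit. Qed.

Lemma spowD s t i j : spow s i * spow t j = spow (s (+) t) (i + j).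
Proof. by rewrite /spow signr_addb exprD mulrACA. Qed.

Lemma spow_mod s i : spow s (i %% N) = spow s i.
Proof. by rewrite /spow expr_mod ?a_totient. Qed.

Lemma spowV s i : spow s (N.-1 * i) * spow s i = 1.
Proof.
by rewrite spowD addbb -mulSnr prednK // /spow expr0 mul1r exprM a_totient expr1n.
Qed.

Lemma inH1 : ~~ inH 1.
Proof. by rewrite -(mulr1n 1) inH_nat dvdn1 neq_ltn m_gt1 orbT. Qed.

Lemma totient_even : ~~ odd N.
Proof.
apply: (signed_pow_inH_even (s := false) inH1).
by rewrite a_totient expr0 subrr mul0r inH0.
Qed.

Definition assocH (u w : Z) :=
  [exists s : bool, exists i : 'I_N, inH (w - spow s i * u)].

Lemma assocHP u w : reflect (exists s i, inH (w - spow s i * u)) (assocH u w).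
Proof.
apply: (iffP existsP) => [[s /existsP[i uw]]|[s [i uw]]]; first by exists s, i.
by exists s; apply/existsP; exists (Ordinal (ltn_pmod i N_gt0)); rewrite /= spow_mod.
Qed.

Lemma assocH_refl u : assocH u u.
Proof. by apply/assocHP; exists false, 0%N; rewrite /spow !mul1r subrr inH0. Qed.

Lemma assocH_sym u w : assocH u w -> assocH w u.
Proof.
move=> /assocHP[s [i uw]]; apply/assocHP; exists s, (N.-1 * i)%N.
have -> : u - spow s (N.-1 * i) * w
    = - (spow s (N.-1 * i) * (w - spow s i * u))
      + (spow s (N.-1 * i) * spow s i - 1) * (- u).
  by ring.
by rewrite spowV subrr mul0r addr0 inHN ?inH_spowM.
Qed.

Lemma assocH_trans u w z : assocH u w -> assocH w z -> assocH u z.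
Proof.
move=> /assocHP[s [i uw]] /assocHP[t [j wz]].
apply/assocHP; exists (t (+) s), (j + i)%N.
have -> : z - spow (t (+) s) (j + i) * u
    = (z - spow t j * w) + spow t j * (w - spow s i * u).
  by rewrite -spowD; ring.
by rewrite inHD ?inH_spowM.
Qed.

Definition class_rep u := odflt u [pick w | assocH u w].

Lemma assocH_class_rep u : assocH u (class_rep u).
Proof. by rewrite /class_rep; case: pickP => [//|/(_ u)]; rewrite assocH_refl. Qed.

Lemma class_rep_eq u w : assocH u w -> class_rep u = class_rep w.
Proof.
move=> uw; have eq_rel : assocH u =1 assocH w.
  move=> z; apply/idP/idP; first exact: assocH_trans (assocH_sym uw).
  exact: assocH_trans uw.
by rewrite /class_rep (eq_pick eq_rel); case: pickP => // /(_ w); rewrite assocH_refl.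
Qed.

Lemma spow_parity_eq u s1 s2 i1 i2 : ~~ inH u ->
  inH (spow s1 i1 * u - spow s2 i2 * u) -> odd i1 = odd i2.
Proof.
move=> uH; wlog le_i : s1 s2 i1 i2 / (i2 <= i1)%N => [hwlog|].
  have [le_i|/ltnW le_i diffH] := leqP i2 i1; first exact: hwlog.
  by apply/esym/(hwlog s2 s1) => //; rewrite -inHNE opprB.
rewrite -(subnK le_i) oddD; set d := (i1 - i2)%N.
have spow1 : spow s1 (d + i2) = spow s1 i2 * a ^+ d by rewrite /spow exprD; ring.
have spow2 : spow s2 i2 = spow s1 i2 * (-1) ^+ (s1 (+) s2).
  by rewrite -[(-1) ^+ _]mulr1 -[_ * 1]/(spow _ 0) spowD addKb addn0.
rewrite spow1 spow2 -mulrA -mulrA -mulrBr inH_spowM -mulrBl.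
by move=> /(signed_pow_inH_even uH) /negbTE ->.
Qed.

(* Well defined: all [i] with [class_rep u = +-a^i u (mod H)] have the same parity
   ([spow_parity_eq]). *)
Definition parity u :=
  [exists s : bool, exists i : 'I_N, odd i && inH (class_rep u - spow s i * u)].

Lemma parityE u s i : ~~ inH u -> inH (class_rep u - spow s i * u) -> parity u = odd i.
Proof.
move=> uH rep_i; apply/idP/idP => [/existsP[t /existsP[j /andP[odd_j rep_j]]]|odd_i].
  rewrite (spow_parity_eq (s1 := s) (s2 := t) (i1 := i) (i2 := j) uH) //.
  have -> : spow s i * u - spow t j * u
      = (class_rep u - spow t j * u) - (class_rep u - spow s i * u) by ring.
  exact: inHB.
apply/existsP; exists s; apply/existsP; exists (Ordinal (ltn_pmod i N_gt0)).
by rewrite /= odd_mod ?(negbTE totient_even) // odd_i spow_mod.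
Qed.

Lemma parity_aM u : ~~ inH u -> parity (a * u) = ~~ parity u.
Proof.
move=> uH; have auH : ~~ inH (a * u) by rewrite inH_unitM ?a_unit.
have rep_au : class_rep (a * u) = class_rep u.
  apply/esym/class_rep_eq/assocHP; exists false, 1%N.
  by rewrite /spow expr0 expr1 mul1r subrr inH0.
have /assocHP[s [i rep_i]] := assocH_class_rep u.
rewrite (parityE uH rep_i) (@parityE _ s (i + N.-1)%N auH).
  by rewrite oddD -subn1 oddB // (negbTE totient_even) addbT.
rewrite rep_au mulrA (_ : spow s (i + N.-1) * a = spow s i) //.
by rewrite /spow -mulrA -exprSr -addnS prednK // exprD a_totient mulr1.
Qed.

Lemma parity_aVM u : ~~ inH u -> parity (a^-1 * u) = ~~ parity u.
Proof.
move=> uH; have aVuH : ~~ inH (a^-1 * u) by rewrite inH_unitM ?unitrV ?a_unit.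
by rewrite -{2}(mulVKr a_unit u) parity_aM // negbK.
Qed.

Lemma parity_opp u w : ~~ inH u -> inH (u + w) -> parity w = parity u.
Proof.
move=> uH uwH; have wH : ~~ inH w.
  by apply: contra uH => wH; rewrite -(addrK w u) inHB.
have rep_w : class_rep w = class_rep u.
  apply/esym/class_rep_eq/assocHP; exists true, 0%N.
  by rewrite /spow expr0 expr1 mulr1 mulN1r opprK addrC.
have /assocHP[s [i rep_i]] := assocH_class_rep u.
rewrite (parityE uH rep_i) (@parityE _ (~~ s) i wH) // rep_w.
have -> : class_rep u - spow (~~ s) i * w
    = (class_rep u - spow s i * u) + spow s i * (u + w).
  by rewrite /spow -addbT signr_addb; ring.
by rewrite inHD ?inH_spowM.
Qed.

Definition point := (Z + bool)%type.

Definition fano_part (t : point) := if t is inl x then inH x else true.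

(* Fano points are indexed by 0..6: [i < 5] stands for [i * m] in [H], 5 and 6 for
   [inr true] and [inr false]. *)
Definition fano_pt (i : nat) : point :=
  if (i < 5)%N then inl (m * i)%:R else inr (i == 5)%N.

Definition inf_index (b : bool) : nat := if b then 5 else 6.

Definition fano_index (t : point) : nat :=
  match t with inl x => (x %/ m)%N | inr b => inf_index b end.

Lemma fano_index_inl_lt5 x : (fano_index (inl x) < 5)%N.
Proof. by rewrite /= ltn_divLR ?(ltn_trans _ m_gt1) // -n_eq; apply: ltn_ord. Qed.

Lemma fano_index_lt7 t : (fano_index t < 7)%N.
Proof. by case: t => [x|[]] //; apply: ltn_trans (fano_index_inl_lt5 x) _. Qed.

Lemma fano_pt_part i : fano_part (fano_pt i).
Proof. by rewrite /fano_pt; case: (ltnP i 5) => //= _; rewrite inH_nat dvdn_mulr. Qed.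

Lemma fano_ptK i : (i < 7)%N -> fano_index (fano_pt i) = i.
Proof.
move=> i_lt7; rewrite /fano_pt; case: (ltnP i 5) => [i_lt5|i_ge5] /=.
  rewrite val_Zp_nat // modn_small ?mulKn ?(ltn_trans _ m_gt1) //.
  by rewrite n_eq mulnC ltn_pmul2r ?(ltn_trans _ m_gt1).
by case: eqP => [->|/eqP]; rewrite /inf_index //; lia.
Qed.

Lemma fano_indexK t : fano_part t -> fano_pt (fano_index t) = t.
Proof.
case: t => [x /= xH|[]] //; rewrite /fano_pt fano_index_inl_lt5 /=.
by rewrite mulnC divnK // natr_Zp.
Qed.

Lemma fano_index_inj s t : fano_part s -> fano_part t ->
  fano_index s = fano_index t -> s = t.
Proof. by move=> sS tS eq_st; rewrite -(fano_indexK sS) -(fano_indexK tS) eq_st. Qed.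

Definition inf_partner (b : bool) (x : Z) : Z :=
  if parity x == b then a * x else a^-1 * x.

Definition third (s t : point) : point :=
  if fano_part s && fano_part t then
    fano_pt (fano_third (fano_index s) (fano_index t))
  else match s, t with
  | inl x, inl y =>
      if y == a * x then inr (parity x)
      else if x == a * y then inr (parity y) else inl (- x - y)
  | inl x, inr b | inr b, inl x => inl (inf_partner b x)
  | inr _, inr _ => s
  end.

Let three_unit : (3%:R : Z) \is a GRing.unit.
Proof. by rewrite unitZpE. Qed.

Lemma notH_neq0 x : ~~ inH x -> x != 0.
Proof. by apply: contra => /eqP ->; apply: inH0. Qed.

Lemma aaM_eq x : a * (a * x) = x -> x = 0.
Proof.
move=> aax; apply: (mulrI three_unit); rewrite mulr0.
have -> : 3%:R * x = a * (a * x) - x by ring.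
by rewrite aax subrr.
Qed.

Lemma aM_neq x : ~~ inH x -> a * x != x.
Proof.
move=> /notH_neq0; apply: contra => /eqP ax.
by rewrite (@aaM_eq x) // ax ax.
Qed.

Lemma aaM_neq x : ~~ inH x -> a * (a * x) != x.
Proof. by move=> /notH_neq0; apply: contra => /eqP /aaM_eq ->. Qed.

Lemma inH_inf_partner b x : inH (inf_partner b x) = inH x.
Proof. by rewrite /inf_partner; case: eqP => _; rewrite inH_unitM ?unitrV ?a_unit. Qed.

Lemma inf_partnerK b x : ~~ inH x -> inf_partner b (inf_partner b x) = x.
Proof.
move=> xH; rewrite /inf_partner; have [px|npx] := eqVneq (parity x) b.
  by rewrite parity_aM // px; case: b {px} => /=; rewrite mulKr ?a_unit.
rewrite parity_aVM //; move: npx; case: (parity x); case: b => //= _;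
  by rewrite mulVKr ?a_unit.
Qed.

Lemma third_inl_inl x y : ~~ (inH x && inH y) ->
  third (inl x) (inl y) = if y == a * x then inr (parity x)
                          else if x == a * y then inr (parity y) else inl (- x - y).
Proof. by rewrite /third /= => /negbTE ->. Qed.

Lemma third_inl_inr x b : ~~ inH x -> third (inl x) (inr b) = inl (inf_partner b x).
Proof. by rewrite /third /= andbT => /negbTE ->. Qed.

Lemma third_inr_inl b x : ~~ inH x -> third (inr b) (inl x) = inl (inf_partner b x).
Proof. by rewrite /third /= => /negbTE ->. Qed.

Lemma third_aM x : ~~ inH x -> third (inl x) (inl (a * x)) = inr (parity x).
Proof. by move=> xH; rewrite third_inl_inl ?eqxx // negb_and xH. Qed.

Lemma third_Ma x : ~~ inH x -> third (inl (a * x)) (inl x) = inr (parity x).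
Proof.
move=> xH; rewrite third_inl_inl ?negb_and ?xH ?orbT //.
by rewrite eq_sym (negbTE (aaM_neq xH)) eqxx.
Qed.

Lemma third_inf_partner b x : ~~ inH x ->
  third (inl x) (inl (inf_partner b x)) = inr b.
Proof.
move=> xH; rewrite /inf_partner; have [<-|npx] := eqVneq (parity x) b.
  exact: third_aM.
have aVxH : ~~ inH (a^-1 * x) by rewrite inH_unitM ?unitrV ?a_unit.
rewrite -{1}(mulVKr a_unit x) third_Ma // parity_aVM //.
by move: npx; case: (parity x); case: b.
Qed.

Lemma thirdC s t : s != t -> third s t = third t s.
Proof.
move=> neq_st; rewrite /third andbC.
case: ifP => [/andP[sS tS]|nS]; first by rewrite fano_thirdC ?fano_index_lt7.
case: s t neq_st nS => [x|b] [y|c] //= neq_st _.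
have [yax|_] := eqVneq y (a * x); have [xay|_] := eqVneq x (a * y) => //.
  have x0 : x = 0 by apply: aaM_eq; rewrite -yax -xay.
  by move: neq_st; rewrite yax x0 mulr0 eqxx.
by rewrite addrC.
Qed.

Lemma third_fano s t : fano_part s -> fano_part t ->
  third s t = fano_pt (fano_third (fano_index s) (fano_index t)).
Proof. by rewrite /third => -> ->. Qed.

Lemma fano_index_neq s t : fano_part s -> fano_part t -> s != t ->
  fano_index s != fano_index t.
Proof. by move=> sS tS; apply: contra => /eqP /(fano_index_inj sS tS) ->. Qed.

Lemma third_neql s t : s != t -> third s t != s.
Proof.
move=> neq_st; have [/andP[sS tS]|nS] := boolP (fano_part s && fano_part t).
  rewrite third_fano //; apply/eqP => ts.
  have := fano_third_neq (fano_index_lt7 s) (fano_index_lt7 t)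
    (fano_index_neq sS tS neq_st).
  by rewrite -{2}ts fano_ptK ?fano_third_lt7 ?fano_index_lt7 ?eqxx.
case: s t neq_st nS => [x|b] [y|c] neq_st nS //.
- rewrite third_inl_inl //; have [//|nyax] := eqVneq y (a * x).
  have [//|_] := eqVneq x (a * y); apply/eqP => -[e]; case/eqP: nyax.
  have -> : y = - x - (- x - y) by ring.
  by rewrite e; ring.
- rewrite andbT in nS; rewrite third_inl_inr // /inf_partner.
  case: (parity x == c); apply/eqP => -[e]; first by move: (aM_neq nS); rewrite e eqxx.
  by move: (aM_neq nS); rewrite -{1}e mulVKr ?a_unit ?eqxx.
- by rewrite third_inr_inl.
Qed.

Lemma thirdK_inl x y : x != y -> ~~ (inH x && inH y) ->
  third (inl x) (third (inl x) (inl y)) = inl y.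
Proof.
move=> neq_xy nH; rewrite third_inl_inl //.
have [yax|nyax] := eqVneq y (a * x).
  rewrite yax (inH_unitM _ a_unit) andbb in nH.
  by rewrite third_inl_inr // /inf_partner eqxx yax.
have [xay|nxay] := eqVneq x (a * y).
  rewrite xay (inH_unitM _ a_unit) andbb in nH.
  rewrite xay third_inl_inr ?inH_unitM ?a_unit // /inf_partner parity_aM //.
  by case: (parity y); rewrite /= mulKr ?a_unit.
have nH' : ~~ (inH x && inH (- x - y)).
  apply: contra nH => /andP[xH zH]; rewrite xH /=.
  have -> : y = - ((- x - y) + x) by ring.
  exact/inHN/inHD.
rewrite third_inl_inl // ifN; last first.
  apply: contra neq_xy => /eqP e; apply/eqP.
  have -> : y = - x - (- x - y) by ring.
  by rewrite e; ring.
rewrite ifN; last first.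
  apply: contra nxay => /eqP e; apply/eqP; apply/subr0_eq.
  have -> : x - a * y = - (x - a * (- x - y)) by ring.
  by rewrite {1}e subrr oppr0.
by congr inl; ring.
Qed.


Lemma thirdK s t : s != t -> third s (third s t) = t.
Proof.
move=> neq_st; have [/andP[sS tS]|nS] := boolP (fano_part s && fano_part t).
  have idx_neq := fano_index_neq sS tS neq_st.
  rewrite (third_fano sS tS) third_fano ?fano_pt_part //.
  by rewrite fano_ptK ?fano_thirdK ?fano_third_lt7 ?fano_index_lt7 ?fano_indexK.
case: s t neq_st nS => [x|b] [y|c] neq_st nS //.
- exact: thirdK_inl.
- by rewrite andbT in nS; rewrite third_inl_inr // third_inf_partner.
- by rewrite third_inr_inl // third_inr_inl ?inH_inf_partner // inf_partnerK.
Qed.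

Definition blocks : {set {set point}} := steiner_blocks third.

Lemma blocks_STS : is_STS blocks.
Proof. exact: steiner_blocks_STS thirdC third_neql thirdK. Qed.

Definition weight (t : point) : Z := if t is inl x then x else 0.

Local Notation wsum B := (\sum_(z in B) weight z).

Lemma sum_Zp_odd : \sum_(x : Z) x = 0.
Proof.
have two_unit : (2%:R : Z) \is a GRing.unit by rewrite unitZpE // coprimen2 n_odd.
have sumN : \sum_(x : Z) x = - \sum_(x : Z) x by rewrite -sumrN (reindex_inj oppr_inj).
by apply: (mulrI two_unit); rewrite mulr0 mulr_natl mulr2n {1}sumN addNr.
Qed.

Lemma sum_weight : \sum_(t in [set: point]) weight t = 0.
Proof.
rewrite (eq_bigl predT) ?big_sumType /=; last by move=> t; rewrite inE.
by rewrite sum_Zp_odd big1 ?addr0.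
Qed.

Lemma inH_wsum (B : {set point}) : {in B, forall t, fano_part t} -> inH (wsum B).
Proof.
move=> BS; apply: (big_ind inH inH0 inHD) => -[x|b] /BS // _; exact: inH0.
Qed.

Lemma fano_pt1 : fano_pt 1 = inl m%:R.
Proof. by rewrite /fano_pt /= muln1. Qed.

Local Notation block := (steiner_block third).

Let block_eq := steiner_block_eq thirdC third_neql thirdK.
Let block_sum := sum_steiner_block thirdC third_neql weight.

Lemma fano_block_mem_m x y : inH x -> inH y -> x != y ->
  (forall c, inr c \notin block (inl x) (inl y)) -> inl m%:R \in block (inl x) (inl y).
Proof.
move=> xH yH neq_xy ninf; pose k := fano_third (x %/ m) (y %/ m).
have u_eq : third (inl x) (inl y) = fano_pt k := @third_fano (inl x) (inl y) xH yH.
have k_lt5 : (k < 5)%N.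
  rewrite ltnNge; apply/negP => k_ge5; case/negP: (ninf (k == 5)%N).
  by rewrite !inE u_eq /fano_pt ltnNge k_ge5 eqxx orbT.
have := fano_line_below5 (fano_index_inl_lt5 x) (fano_index_inl_lt5 y)
  (@fano_index_neq (inl x) (inl y) xH yH neq_xy) k_lt5.
rewrite -fano_pt1 !inE => /or3P[] /eqP ->.
- by rewrite (@fano_indexK (inl x) xH) eqxx.
- by rewrite (@fano_indexK (inl y) yH) eqxx orbT.
- by rewrite u_eq eqxx orbT.
Qed.

Lemma third_inl_inl_finite x y : ~~ (inH x && inH y) ->
  (forall c, inr c \notin block (inl x) (inl y)) -> third (inl x) (inl y) = inl (- x - y).
Proof.
move=> nH ninf; have [yax|nyax] := eqVneq y (a * x).
  case/negP: (ninf (parity x)).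
  by rewrite !inE third_inl_inl // yax (eqxx (a * x)) eqxx !orbT.
have [xay|nxay] := eqVneq x (a * y).
  case/negP: (ninf (parity y)).
  by rewrite !inE third_inl_inl // (negbTE nyax) xay (eqxx (a * y)) eqxx !orbT.
by rewrite third_inl_inl // (negbTE nyax) (negbTE nxay).
Qed.

Lemma block_finite_sum B : B \in blocks -> inr true \notin B -> inr false \notin B ->
  inH (wsum B) /\ (inl m%:R \notin B -> wsum B = 0).
Proof.
move=> /steiner_blockP[s [t [neq_st ->]]] ninT ninF.
have {ninT ninF} ninf c : inr c \notin block s t by case: c.
have inl_of u : u \in block s t -> exists x, u = inl x.
  by case: u => [x|c] uB; [exists x | case/negP: (ninf c)].
have [x sx] : exists x, s = inl x by apply: inl_of; rewrite !inE eqxx.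
have [y ty] : exists y, t = inl y by apply: inl_of; rewrite !inE eqxx orbT.
subst s t; have neq_xy : x != y by apply: contra neq_st => /eqP ->.
have [/andP[xH yH]|nH] := boolP (inH x && inH y).
  split=> [|/negP[]]; last exact: fano_block_mem_m.
  apply: inH_wsum => u; rewrite !inE => /orP[/orP[]|] /eqP -> //.
  by rewrite (@third_fano (inl x) (inl y)) ?fano_pt_part.
rewrite block_sum // third_inl_inl_finite //= (_ : x + y + (- x - y) = 0); last by ring.
by split=> //; apply: inH0.
Qed.

Lemma third_inf : third (inr true) (inr false) = inl m%:R.
Proof. by rewrite third_fano // fano_third56 fano_pt1. Qed.

Lemma block_inf_both B : B \in blocks -> inr true \in B -> inr false \in B ->
  B = block (inr true) (inr false).
Proof. by move=> /steiner_blockP[s [t [neq_st ->]]]; apply: block_eq. Qed.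

Lemma block_inf_fano b z : inH z -> inr (~~ b) \notin block (inr b) (inl z) ->
  exists i j, [/\ (i < 5)%N, (j < 5)%N, j = fano_third (inf_index b) i
                 & block (inr b) (inl z) = [set inr b; fano_pt i; fano_pt j]].
Proof.
move=> zH ninb; pose i := (z %/ m)%N; pose j := fano_third (inf_index b) i.
have i_lt5 : (i < 5)%N := fano_index_inl_lt5 z.
have bi_lt7 : (inf_index b < 7)%N by case: (b).
have neq_bi : inf_index b != i by case: (b); apply/eqP => bi; move: i_lt5; rewrite -bi.
have j_lt7 : (j < 7)%N by apply: fano_third_lt7; rewrite // (ltn_trans i_lt5).
have j_neq : j != inf_index b by apply: fano_third_neq; rewrite // (ltn_trans i_lt5).
have u_eq : third (inr b) (inl z) = fano_pt j := @third_fano (inr b) (inl z) isT zH.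
have j_lt5 : (j < 5)%N.
  rewrite ltnNge; apply/negP => j_ge5; case/negP: ninb.
  rewrite !inE u_eq /fano_pt ltnNge j_ge5 /=; apply/orP; right; apply/eqP; congr inr.
  by move: j_neq; case: (b) => /= /eqP; lia.
exists i, j; split=> //.
by rewrite /steiner_block u_eq -(@fano_indexK (inl z) zH).
Qed.

Lemma block_inf_partner_sum b z : ~~ inH z ->
  exists q, [/\ ~~ inH q, parity q = b & wsum (block (inr b) (inl z)) = - q].
Proof.
move=> zH; exists (if parity z == b then z else a^-1 * z).
rewrite block_sum // third_inr_inl // /= add0r /inf_partner.
have [pzb|npzb] := eqVneq (parity z) b; split=> //.
- by ring.
- by rewrite inH_unitM ?unitrV ?a_unit.
- by rewrite parity_aVM //; move: npzb; case: (parity z); case: (b).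
- by rewrite -{1}(mulVKr a_unit z); set w := a^-1 * z; ring.
Qed.

Lemma block_inf_one b B : B \in blocks -> inr b \in B -> inr (~~ b) \notin B ->
  (exists i j, [/\ (i < 5)%N, (j < 5)%N, j = fano_third (inf_index b) i
                 & B = [set inr b; fano_pt i; fano_pt j]])
  \/ exists q, [/\ ~~ inH q, parity q = b & wsum B = - q].
Proof.
move=> /steiner_blockP[s [t [neq_st ->]]] inb ninb.
have [y [yB nyb]] : exists y, y \in block s t /\ y != inr b.
  have [sb|nsb] := eqVneq s (inr b); last by exists s; split; rewrite ?inE ?eqxx.
  by exists t; split; rewrite ?inE ?eqxx ?orbT // -sb eq_sym.
have nby : inr b != y by rewrite eq_sym.
rewrite (block_eq neq_st nby inb yB) in ninb *.
case: y {yB} nyb nby ninb inb => [z|c] nyb nby ninb inb; last first.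
  by move: nyb ninb {nby inb}; case: b; case: c; rewrite ?inE ?eqxx ?orbT.
have [zH|nzH] := boolP (inH z); [left; exact: block_inf_fano | right].
exact: block_inf_partner_sum.
Qed.

Lemma inH_wsum_fano_line b i j : inH (wsum [set inr b; fano_pt i; fano_pt j]).
Proof.
by apply: inH_wsum => t; rewrite !inE => /orP[/orP[]|] /eqP ->; rewrite ?fano_pt_part.
Qed.

Lemma m_neq0 : (m%:R : Z) != 0.
Proof.
apply/eqP => /(congr1 (@nat_of_ord _)); rewrite val_Zp_nat // modn_small /=; first lia.
by rewrite n_eq -[X in (X < _)%N]mul1n ltn_pmul2r ?(ltn_trans _ m_gt1).
Qed.

Lemma inf_blocks_sum_notin_H BT BF : BT \in blocks -> BF \in blocks ->
  [disjoint BT & BF] -> inr true \in BT -> inr false \in BF -> ~~ inH (wsum BT + wsum BF).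
Proof.
move=> BTb BFb dTF infT infF.
have ninF : inr false \notin BT by rewrite (disjointFl dTF infF).
have ninT : inr true \notin BF by rewrite (disjointFr dTF infT).
have meet i j : fano_pt i \in BT -> fano_pt j \in BF -> i = j -> False.
  by move=> iT jF eq_ij; subst j; rewrite (disjointFr dTF iT) in jF.
apply/negP => pair.
have [[i [j [i_lt5 j_lt5 jE BT_eq]]]|[q [qH pq sumT]]] :=
  block_inf_one BTb infT ninF;
have [[i' [j' [i'_lt5 j'_lt5 j'E BF_eq]]]|[q' [q'H pq' sumF]]] :=
  block_inf_one BFb infF ninT.
- have := fano_lines_5_6_meet i_lt5 i'_lt5; rewrite -jE -j'E j_lt5 j'_lt5.
  move=> /(_ isT isT) /hasP[k] /[!inE] /orP[] /eqP -> /orP[] /eqP eq_k;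
    by case: (meet _ _ _ _ eq_k); rewrite ?BT_eq ?BF_eq !inE eqxx !orbT.
- move: (inHB pair (inH_wsum_fano_line true i j)).
  by rewrite -BT_eq addrAC subrr add0r sumF inHNE (negbTE q'H).
- move: (inHB pair (inH_wsum_fano_line false i' j')).
  by rewrite -BF_eq addrK sumT inHNE (negbTE qH).
- by move: pair; rewrite sumT sumF -opprD inHNE => /(parity_opp qH); rewrite pq pq'.
Qed.

Section DisjointBlocks.
Variable P : {set {set point}}.
Hypothesis sPB : P \subset blocks.
Hypothesis trivP : trivIset P.

Let notin_other B B' t : B \in P -> B' \in P -> B != B' -> t \in B' -> t \notin B.
Proof.
move=> BP B'P neqB tB'; apply/negP => tB; case/negP: neqB.
by rewrite -(def_pblock trivP BP tB) -(def_pblock trivP B'P tB').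
Qed.

Lemma sum_blocks_inf_both :
  block (inr true) (inr false) \in P -> \sum_(B in P) wsum B = m%:R.
Proof.
move=> infP; have inB t : t \in [:: inr true; inr false; inl m%:R] ->
    t \in block (inr true) (inr false).
  by rewrite !inE -third_inf => /or3P[] /eqP ->; rewrite eqxx ?orbT.
have others0 : \sum_(B in P | B != block (inr true) (inr false)) wsum B = 0.
  apply: big1 => B /andP[BP nB]; apply: (block_finite_sum (subsetP sPB _ BP) _ _).2;
    by apply: notin_other BP infP nB _; apply: inB; rewrite !inE eqxx ?orbT.
by rewrite (bigD1 _ infP) /= others0 addr0 block_sum // third_inf /= !add0r.
Qed.

Lemma sum_blocks_inf_apart BT BF : BT \in P -> BF \in P -> BT != BF ->
  inr true \in BT -> inr false \in BF -> ~~ inH (\sum_(B in P) wsum B).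
Proof.
move=> BTP BFP nTF infT infF.
pose R := \sum_(B | (B \in P) && (B != BT) && (B != BF)) wsum B.
have R_H : inH R.
  apply: (big_ind inH inH0 inHD) => B /andP[/andP[BP nBT] nBF].
  apply: (block_finite_sum (subsetP sPB _ BP) _ _).1.
  - exact: notin_other BP BTP nBT infT.
  - exact: notin_other BP BFP nBF infF.
have -> : \sum_(B in P) wsum B = wsum BT + wsum BF + R.
  by rewrite (bigD1 BT) //= (bigD1 BF) /= ?addrA // BFP eq_sym.
have dTF : [disjoint BT & BF] := trivIsetP trivP _ _ BTP BFP nTF.
apply: contra (inf_blocks_sum_notin_H (subsetP sPB _ BTP) (subsetP sPB _ BFP)
  dTF infT infF).
by move=> /inHB /(_ R_H); rewrite addrK.
Qed.

End DisjointBlocks.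

Lemma blocks_no_parallel_class : ~ exists P, parallel_class blocks P.
Proof.
move=> [P [sPB partP]]; have trivP := partition_trivIset partP.
have sum0 : \sum_(B in P) wsum B = 0.
  by rewrite -(set_partition_big _ partP) sum_weight.
have inP t : pblock P t \in P by rewrite pblock_mem // (cover_partition partP) inE.
have in_pblock t : t \in pblock P t by rewrite mem_pblock (cover_partition partP) inE.
have [eq_TF|nTF] := eqVneq (pblock P (inr true)) (pblock P (inr false)).
  have infP : block (inr true) (inr false) \in P.
    rewrite -(block_inf_both (subsetP sPB _ (inP (inr true)))) ?in_pblock //.
    by rewrite eq_TF in_pblock.
  by move/eqP: m_neq0; rewrite -(sum_blocks_inf_both sPB trivP infP) sum0.
move: (sum_blocks_inf_apart sPB trivP (inP _) (inP _) nTF (in_pblock _) (in_pblock _)).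
by rewrite sum0 inH0.
Qed.

End Construction.

Lemma point_STS_without_parallel_class n' m :
  (n'.+2 = 5 * m)%N -> odd m -> (1 < m)%N -> coprime n'.+2 3 ->
  (forall p, prime p -> (p %| m)%N -> ord_divisible p (-2) 4) ->
  STS_without_parallel_class (point n').
Proof.
move=> n_eq m_odd m_gt1 cop3 ord_m; exists (blocks n' m); split.
  exact: blocks_STS.
exact: blocks_no_parallel_class n_eq m_odd m_gt1 cop3 ord_m.
Qed.

Lemma ord_divisible_5 : ord_divisible 5 (-2) 4.
Proof. by exists 4%N; split=> //; split=> // -[|[|[|[|j]]]]. Qed.

Lemma inV_pow25 k : inV (25 ^ k.+1 + 2).
Proof.
have mod30 : (25 ^ k.+1 %% 30 = 25)%N.
  by elim: k => [|k IHk] //; rewrite expnS -modnMmr IHk.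
split; [by rewrite addn2 | by rewrite -modnDml mod30 |].
move=> p p_prime; rewrite addnK (Euclid_dvdX _ _ p_prime) => /andP[p_dvd _].
suff -> : p = 5%N by apply: ord_divisible_5.
by apply/eqP; move: p_dvd; rewrite (_ : 25 = 5 * 5)%N // Euclid_dvdM // orbb dvdn_prime2.
Qed.

Lemma inV_unbounded N : exists v, (N < v)%N /\ inV v.
Proof.
exists (25 ^ N.+1 + 2)%N; split; last exact: inV_pow25.
by have := ltn_expl N.+1 (isT : 1 < 25)%N; lia.
Qed.

Lemma inV_STS v : inV v -> STS_without_parallel_class 'I_v.
Proof.
move=> [v_gt0 v_mod ord_v]; pose m := ((v - 2) %/ 5)%N.
have n_eq : ((v - 4).+2 = 5 * m)%N by rewrite /m; lia.
have m_odd : odd m.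
  have : (m %% 2 = 1)%N by rewrite /m; lia.
  by rewrite modn2; case: (odd m).
have m_gt1 : (1 < m)%N by rewrite /m; lia.
have cop3 : coprime (v - 4).+2 3.
  by rewrite coprime_sym prime_coprime //; apply/negP; lia.
have ord_m p : prime p -> (p %| m)%N -> ord_divisible p (-2) 4.
  move=> p_prime p_dvd_m; apply: ord_v p_prime (dvdn_trans p_dvd_m _).
  by apply/dvdnP; exists 5%N; rewrite /m; lia.
apply: (STS_without_parallel_class_card _
  (point_STS_without_parallel_class n_eq m_odd m_gt1 cop3 ord_m)).
by rewrite card_sum card_bool /Zp_trunc /= !card_ord; lia.
Qed.

Theorem theorem1 :
  (forall N : nat, exists v : nat, (N < v)%N /\ inV v) /\
  (forall v : nat, inV v ->
     exists B : {set {set 'I_v}},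
       is_STS B /\ ~ (exists P : {set {set 'I_v}}, parallel_class B P)).
Proof. split; [exact: inV_unbounded | exact: inV_STS]. Qed.
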